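(* Let $V$ be a finite set, $f:2^V\to\mathbb{R}_+$ nonnegative submodular with $f(\emptyset)=0$, $t_1,\ldots,t_k\in V$ distinct, and $\mathbf{x}=(x_{i,j})_{i\in[k],j\in V}$ with $x_{i,j}\ge0$, $\sum_{i=1}^k x_{i,j}=1$ for all $j\in V$, and $x_{i,t_i}=1$ for all $i$. For $\theta\in[0,1]$ let $A_i(\theta)=\{j: x_{i,j}>\theta\}$, $A(\theta)=\bigcup_{i=1}^k A_i(\theta)$ and $U(\theta)=V\setminus A(\theta)$. Then for any $\delta\in[\tfrac12,1]$, $$\sum_{i=1}^{k-1}\int_0^\delta f\big((A_1(\theta)\cup\cdots\cup A_i(\theta))\cap A_{i+1}(\theta)\big)\,d\theta\ \ge\ \int_0^1 f(U(\theta))\,d\theta.$$ *)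

From HB Require Import structures.
From mathcomp Require Import all_boot all_order all_algebra.
From mathcomp Require Import all_classical all_reals all_analysis.
Set Implicit Arguments. Unset Strict Implicit. Unset Printing Implicit Defensive.
Import Order.TTheory GRing.Theory Num.Theory.
Local Open Scope ring_scope.

Definition submodular (V : finType) (R : realType) (f : {set V} -> R) :=
  forall A B : {set V}, f (A :|: B) + f (A :&: B) <= f A + f B.

Definition Aset (V : finType) (R : realType) (k : nat)
  (x : 'I_k -> V -> R) (i : 'I_k) (theta : R) : {set V} :=
  [set j | theta < x i j].

Definition Aall (V : finType) (R : realType) (k : nat)
  (x : 'I_k -> V -> R) (theta : R) : {set V} :=
  \bigcup_(i < k) Aset x i theta.

Definition Uset (V : finType) (R : realType) (k : nat)
  (x : 'I_k -> V -> R) (theta : R) : {set V} :=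
  ~: Aall x theta.

(* For 0-based i (1 <= i < k), this is (A_0 u ... u A_{i-1}) n A_i,
   i.e. in the paper's 1-based indexing (A_1 u ... u A_{i'}) n A_{i'+1}
   with i' = i. *)
Definition prefix_cap (V : finType) (R : realType) (k : nat)
  (x : 'I_k -> V -> R) (i : 'I_k) (theta : R) : {set V} :=
  (\bigcup_(j < k | (j < i)%N) Aset x j theta) :&: Aset x i theta.

From HB Require Import structures.
From mathcomp Require Import all_boot all_order all_algebra.
From mathcomp Require Import all_classical all_reals all_analysis.
From mathcomp Require Import lra measurable_realfun.
Import Order.TTheory GRing.Theory Num.Theory.

(* Order V by M_j = max_i x_{i,j} and let m_j be the marginal gain of j when f
   is built up along this order.  Submodularity gives f T >= sum_{j in T} m_j for
   every T, with equality on the initial segments U(theta) = {j | M_j <= theta}.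
   Integrating, both sides become linear in the lengths of level sets: the right
   side equals sum_j m_j (1 - M_j), while the i-th term on the left is at least
   sum_j m_j y_{i,j}, where y_{i,j} = min(max_{l<i} x_{l,j}, x_{i,j}) is the length
   of {theta | j in (A_1 u ... u A_i) n A_{i+1}}; y_{i,j} <= 1/2 <= delta since
   x_{l,j} + x_{i,j} <= 1.  Finally min + max = sum makes sum_i y_{i,j}
   telescope to 1 - M_j. *)

Local Open Scope ring_scope.

Set Implicit Arguments.
Unset Strict Implicit.
Unset Printing Implicit Defensive.

Lemma sorted_filter_cat (T : Type) (e : rel T) (P : pred T) (s : seq T) :
  transitive e -> (forall a b, e a b -> P b -> P a) -> sorted e s ->
  s = [seq a <- s | P a] ++ [seq a <- s | ~~ P a].
Proof.
move=> e_trans P_down; elim: s => //= a s IH a_path.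
rewrite [in LHS](IH (path_sorted a_path)); case: ifP => //= Pa.
have not_P : all (predC P) s.
  apply: sub_all (order_path_min e_trans a_path) => b /= e_ab.
  by apply: contraFN Pa; exact: P_down.
have -> : [seq b <- s | P b] = [::].
  apply: size0nil; rewrite size_filter; apply/eqP.
  by rewrite -leqn0 leqNgt -has_count -all_predC.
by move/all_filterP: not_P => ->.
Qed.

Section GreedyMarginals.
Variables (R : realType) (V : finType) (f : {set V} -> R) (s : seq V).
Hypotheses (f0 : f finset.set0 = 0) (s_uniq : uniq s).

Definition greedy_marginal (j : V) : R :=
  f (j |: [set i in take (index j s) s]) - f [set i in take (index j s) s].

Lemma greedy_marginal_cat p a q : s = p ++ a :: q ->
  greedy_marginal a = f (a |: [set i in p]) - f [set i in p].
Proof.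
move=> s_cat; have : uniq (p ++ a :: q) by rewrite -s_cat.
rewrite cat_uniq /= => /and4P[_ /norP[a_p _] _ _].
by rewrite /greedy_marginal s_cat index_cat (negbTE a_p) /= eqxx addn0 take_size_cat.
Qed.

Lemma prefix_last_notin p a q : s = rcons p a ++ q -> a \notin p.
Proof.
move=> s_cat; move: s_uniq; rewrite s_cat cat_uniq rcons_uniq.
by case/andP => /andP[].
Qed.

Lemma sum_greedy_marginal_prefix p q : s = p ++ q ->
  \sum_(j in [set i in p]) greedy_marginal j = f [set i in p].
Proof.
elim/last_ind: p q => [|p a IH] q s_cat.
  rewrite (_ : [set i in [::]] = finset.set0) ?big_set0 ?f0 //.
have a_p := prefix_last_notin s_cat.
rewrite cat_rcons in s_cat.
have -> : [set i in rcons p a] = a |: [set i in p].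
  by apply/setP => i; rewrite !inE mem_rcons inE.
rewrite big_setU1 ?inE //= (IH _ s_cat) (greedy_marginal_cat s_cat).
by rewrite subrK.
Qed.

Hypothesis s_all : forall j, j \in s.

Lemma sum_greedy_marginal_le (T : {set V}) : submodular f ->
  \sum_(j in T) greedy_marginal j <= f T.
Proof.
move=> f_sub; have -> : T = T :&: [set i in s].
  by apply/setP => j; rewrite !inE s_all andbT.
suff : forall p q, s = p ++ q ->
    \sum_(j in T :&: [set i in p]) greedy_marginal j <= f (T :&: [set i in p]).
  by move=> /(_ s [::]); apply; rewrite cats0.
elim/last_ind => [|p a IH] q s_cat.
  rewrite (_ : _ :&: _ = finset.set0) ?big_set0 ?f0 //.
  by apply/setP => i; rewrite !inE andbF.
have a_p := prefix_last_notin s_cat.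
rewrite cat_rcons in s_cat.
set P := [set i in p].
have -> : [set i in rcons p a] = a |: P :> {set V}.
  by apply/setP => i; rewrite !inE mem_rcons inE.
have [a_T | a_T] := boolP (a \in T); last first.
  have -> : T :&: (a |: P) = T :&: P.
    by apply/setP => i; rewrite !inE; case: eqP => // ->; rewrite (negbTE a_T).
  exact: IH s_cat.
have a_P : a \notin P by rewrite inE.
have -> : T :&: (a |: P) = a |: (T :&: P).
  by apply/setP => i; rewrite !inE; case: eqP => // ->; rewrite a_T.
rewrite big_setU1 ?inE ?(negbTE a_p) ?andbF //= (greedy_marginal_cat s_cat).
have := f_sub (a |: (T :&: P)) P.
have -> : (a |: (T :&: P)) :|: P = a |: P.
  by apply/setP => i; rewrite !inE; case: (i \in p); rewrite ?andbT ?andbF ?orbT ?orbF.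
have -> : (a |: (T :&: P)) :&: P = T :&: P.
  apply/setP => i; rewrite !inE; case: eqP => [->|_] /=.
    by rewrite (negbTE a_p) !andbF.
  by rewrite -andbA andbb.
move: (IH _ s_cat); lra.
Qed.

Lemma sum_greedy_marginal_sorted (key : V -> R) (tau : R) :
  sorted (fun a b => key a <= key b) s ->
  \sum_(j in [set j | key j <= tau]) greedy_marginal j = f [set j | key j <= tau].
Proof.
move=> s_sorted.
have -> : [set j | key j <= tau] = [set j in [seq j <- s | key j <= tau]].
  by apply/setP => j; rewrite !inE mem_filter s_all andbT.
apply: (@sum_greedy_marginal_prefix _ [seq j <- s | ~~ (key j <= tau)]).
apply: sorted_filter_cat s_sorted => [b a c|a b]; first exact: le_trans.
exact: le_trans.
Qed.

End GreedyMarginals.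

Local Open Scope classical_set_scope.

Section SetFunctionIntegral.
Context d (T : measurableType d) (R : realType) (mu : {measure set T -> \bar R}).
Variables (V : finType) (D : set T) (S : T -> {set V}).
Hypotheses (mD : measurable D) (mS : forall j, measurable [set t | j \in S t]).

Lemma measurable_fiber (A : {set V}) : measurable [set t | S t = A].
Proof.
have -> : [set t | S t = A] =
    \big[setI/setT]_(j <- enum V) [set t | (j \in S t) = (j \in A)].
  rewrite -bigcap_seq; apply/seteqP; split => [t /= StA j _|t /= SA].
    by rewrite /= StA.
  by apply/setP => j; apply: SA; rewrite /= mem_enum.
apply: bigsetI_measurable => j _; have [_ | _] := boolP (j \in A); first exact: mS.
rewrite (_ : [set t | _] = ~` [set t | j \in S t]); first exact: measurableC.
by apply/seteqP; split => t /=; [move=> -> | move/negP/negbTE ->].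
Qed.

Lemma measurable_fun_setfun (g : {set V} -> R) :
  measurable_fun D (fun t => (g (S t))%:E).
Proof.
apply/measurable_EFinP; apply: (measurable_funS measurableT) => //.
have -> : (fun t => g (S t)) = fun t => \sum_(A : {set V}) g A * \1_[set t | S t = A] t.
  apply/funext => t; rewrite (bigD1 (S t)) //= big1 ?addr0 ?indicE ?mem_set ?mulr1 //.
  by move=> A /eqP StA; rewrite indicE memNset ?mulr0 //= => /esym.
apply: measurable_sum => A; apply: measurable_funM; first exact: measurable_cst.
exact/measurable_indic/measurable_fiber.
Qed.

Variable len : V -> R.
Hypothesis mu_mem : forall j, mu ([set t | j \in S t] `&` D) = (len j)%:E.

Lemma integral_sum_mem (c : V -> R) : (forall j, 0 <= c j) ->
  (\int[mu]_(t in D) (\sum_(j in S t) c j)%:E = (\sum_j c j * len j)%:E)%E.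
Proof.
move=> c_ge0; under eq_integral do rewrite big_mkcond -sumEFin.
rewrite ge0_integral_sum //; last 2 first.
- by move=> j; exact: (measurable_fun_setfun (fun A => if j \in A then c j else 0)).
- by move=> j t _; case: ifP; rewrite lee_fin.
rewrite -sumEFin; apply: eq_bigr => j _.
transitivity (\int[mu]_(t in D) (c j * \1_[set t | j \in S t] t)%:E)%E.
  apply: eq_integral => t _; rewrite indicE.
  have [jS|/negP jS] := boolP (j \in S t).
    by rewrite mem_set ?mulr1.
  by rewrite memNset ?mulr0.
under eq_integral do rewrite EFinM.
rewrite ge0_integralZl_EFin ?c_ge0 ?integral_indic ?mu_mem ?EFinM //.
exact/measurable_EFinP/measurable_indic.
Qed.

Lemma integralD_sum_mem (g : {set V} -> R) (c : V -> R) :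
  (forall A, 0 <= g A) -> (forall j, 0 <= c j) ->
  (\int[mu]_(t in D) (g (S t) + \sum_(j in S t) c j)%:E
   = \int[mu]_(t in D) (g (S t))%:E + (\sum_j c j * len j)%:E)%E.
Proof.
move=> g_ge0 c_ge0; under eq_integral do rewrite EFinD.
rewrite ge0_integralD ?integral_sum_mem //.
- by move=> t _; rewrite lee_fin.
- exact: measurable_fun_setfun.
- by move=> t _; rewrite lee_fin sumr_ge0.
- exact: (measurable_fun_setfun (fun A => \sum_(j in A) c j)).
Qed.

Section SignedWeights.
Variables (g : {set V} -> R) (m : V -> R).
Hypothesis g_ge0 : forall A, 0 <= g A.

(* Integrals in \bar R are only additive for nonnegative integrands, hence the
   split of m into its positive and negative parts. *)
Let neg j := Num.max (- m j) 0.
Let pos j := m j + neg j.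

Let neg_ge0 j : 0 <= neg j. Proof. by rewrite le_max lexx orbT. Qed.
Let pos_ge0 j : 0 <= pos j. Proof. by rewrite -lerBlDl sub0r le_max lexx. Qed.

Let sum_pos_neg : \sum_j pos j * len j - \sum_j neg j * len j = \sum_j m j * len j.
Proof. by rewrite -sumrB; apply: eq_bigr => j _; rewrite /pos mulrDl addrK. Qed.

Lemma modular_le_integral_setfun :
  (forall t, D t -> \sum_(j in S t) m j <= g (S t)) ->
  ((\sum_j m j * len j)%:E <= \int[mu]_(t in D) (g (S t))%:E)%E.
Proof.
move=> m_le_g.
have : ((\sum_j pos j * len j)%:E
        <= \int[mu]_(t in D) (g (S t))%:E + (\sum_j neg j * len j)%:E)%E.
  rewrite -integralD_sum_mem // -integral_sum_mem //.
  apply: ge0_le_integral => //.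
  - by move=> t _; rewrite lee_fin sumr_ge0.
  - exact: (measurable_fun_setfun (fun A => \sum_(j in A) pos j)).
  - exact: (measurable_fun_setfun (fun A => g A + \sum_(j in A) neg j)).
  - by move=> t Dt; rewrite lee_fin /pos big_split /= lerD2r m_le_g.
by rewrite -leeBlDr // -EFinB sum_pos_neg.
Qed.

Lemma integral_setfun_modular :
  (forall t, D t -> g (S t) = \sum_(j in S t) m j) ->
  (\int[mu]_(t in D) (g (S t))%:E = (\sum_j m j * len j)%:E)%E.
Proof.
move=> g_modular.
have : (\int[mu]_(t in D) (g (S t))%:E + (\sum_j neg j * len j)%:E
        = (\sum_j pos j * len j)%:E)%E.
  rewrite -integralD_sum_mem // -integral_sum_mem //.
  by apply: eq_integral => t /set_mem Dt; rewrite g_modular // /pos big_split.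
move/(congr1 (fun z => z - (\sum_j neg j * len j)%:E)%E).
by rewrite addeK // -EFinB sum_pos_neg.
Qed.

End SignedWeights.

End SetFunctionIntegral.

Section PrefixMax.
Variables (R : realFieldType) (k : nat) (a : 'I_k -> R).
Hypothesis a_ge0 : forall i, 0 <= a i.

Definition prefix_max (n : nat) : R := \big[Num.max/0]_(l < k | (l < n)%N) a l.

Lemma prefix_max0 : prefix_max 0 = 0.
Proof. by rewrite /prefix_max big_pred0. Qed.

Lemma prefix_max_ge0 n : 0 <= prefix_max n.
Proof. exact: bigmax_ge_id. Qed.

Lemma prefix_maxS (i : 'I_k) : prefix_max i.+1 = Num.max (prefix_max i) (a i).
Proof.
rewrite /prefix_max (bigmaxD1 i) ?ltnSn // maxC; congr Num.max; apply: eq_bigl => l.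
by rewrite ltnS [RHS]ltn_neqAle andbC.
Qed.

Lemma prefix_max_le n t : 0 <= t ->
  (prefix_max n <= t) = [forall l : 'I_k, (l < n)%N ==> (a l <= t)].
Proof.
move=> t_ge0; apply/bigmax_leP/forallP => [[_ a_le] l|a_le].
  exact/implyP/a_le.
by split=> // l; exact/implyP/a_le.
Qed.

Lemma prefix_max_gt n t : (0 < n <= k)%N ->
  (t < prefix_max n) = [exists l : 'I_k, (l < n)%N && (t < a l)].
Proof.
case/andP=> n_gt0 n_le_k; have [t_lt0|t_ge0] := ltP t 0.
  rewrite (lt_le_trans t_lt0 (prefix_max_ge0 n)); apply/esym/existsP.
  by exists (Ordinal (leq_trans n_gt0 n_le_k)); rewrite n_gt0 (lt_le_trans t_lt0).
rewrite ltNge prefix_max_le // negb_forall; apply: eq_existsb => l.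
by rewrite negb_imply -ltNge.
Qed.

Lemma sum_min_prefix_max :
  \sum_(i < k | (0 < i)%N) Num.min (prefix_max i) (a i) = \sum_(i < k) a i - prefix_max k.
Proof.
have min0 (i : 'I_k) : i = 0%N :> nat -> Num.min (prefix_max i) (a i) = 0.
  by move=> i0; rewrite i0 prefix_max0 min_l.
transitivity (\sum_(i < k) Num.min (prefix_max i) (a i)).
  rewrite [RHS](bigID (fun i : 'I_k => (0 < i)%N)) /= [X in _ = _ + X]big1 ?addr0 //.
  by move=> i; rewrite lt0n negbK => /eqP; exact: min0.
have minE (i : 'I_k) :
    Num.min (prefix_max i) (a i) = a i - (prefix_max i.+1 - prefix_max i).
  by rewrite prefix_maxS; have := addr_min_max (prefix_max i) (a i); lra.
rewrite (eq_bigr _ (fun i _ => minE i)) sumrB.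
rewrite -(big_mkord xpredT (fun i => prefix_max i.+1 - prefix_max i)).
by rewrite telescope_sumr // prefix_max0 subr0.
Qed.

Section Stochastic.
Hypothesis a_sum1 : \sum_(i < k) a i = 1.

Let pair_le1 l i : l != i -> a l + a i <= 1.
Proof.
move=> l_i; rewrite -a_sum1 (bigD1 l) //= (bigD1 i) 1?eq_sym //= addrA lerDl.
exact: sumr_ge0.
Qed.

Let le1 i : a i <= 1.
Proof. by rewrite -a_sum1 (bigD1 i) //= lerDl sumr_ge0. Qed.

Lemma prefix_max_le1 n : prefix_max n <= 1.
Proof. exact: bigmax_le. Qed.

Lemma min_prefix_max_le_half (i : 'I_k) : Num.min (prefix_max i) (a i) <= 2^-1.
Proof.
have P_le : prefix_max i <= 1 - a i.
  apply: bigmax_le; first by rewrite subr_ge0.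
  move=> l l_i; have := @pair_le1 l i.
  by rewrite -val_eqE /= (ltn_eqF l_i) => /(_ isT); lra.
rewrite ge_min; apply/orP; case: (lerP (a i) 2^-1) => a_half; [right | left]; lra.
Qed.

End Stochastic.

End PrefixMax.

Section Thresholds.
Variables (V : finType) (R : realType) (k : nat) (x : 'I_k -> V -> R).
Hypothesis x_ge0 : forall i j, 0 <= x i j.

Lemma mem_prefix_cap (i : 'I_k) t j : (0 < i)%N ->
  (j \in prefix_cap x i t) = (t < Num.min (prefix_max (x^~ j) i) (x i j)).
Proof.
move=> i_gt0; rewrite /prefix_cap !inE lt_min (prefix_max_gt (x_ge0^~ j)); last first.
  by rewrite i_gt0 ltnW.
congr andb; apply/bigcupP/existsP => [[l l_i]|[l /andP[l_i t_l]]].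
  by rewrite inE => t_l; exists l; rewrite l_i.
by exists l; rewrite ?inE.
Qed.

Lemma mem_Uset t j : (0 < k)%N -> (j \in Uset x t) = (prefix_max (x^~ j) k <= t).
Proof.
move=> k_gt0; rewrite /Uset /Aall inE leNgt (prefix_max_gt (x_ge0^~ j)) ?k_gt0 ?leqnn //.
congr negb; apply/bigcupP/existsP => [[l _]|[l /andP[_ t_l]]].
  by rewrite inE => t_l; exists l; rewrite ltn_ord.
by exists l; rewrite ?inE.
Qed.

End Thresholds.

Section IntervalMeasure.
Variable R : realType.

Lemma lebesgue_measure_ltI_itvcc (a b c : R) : a <= c <= b ->
  lebesgue_measure ([set t | t < c] `&` `[a, b]) = (c - a)%:E.
Proof.
case/andP=> a_c c_b; rewrite (_ : _ `&` _ = `[a, c[%classic).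
  rewrite lebesgue_measure_itv /= lte_fin; case: ltP => [_|c_a]; first by rewrite -EFinD.
  by rewrite (_ : c = a) ?subrr //; apply/le_anti; rewrite c_a a_c.
apply/seteqP; split => t /=; rewrite !in_itv /=; first by case=> -> /andP[-> _].
by case/andP=> a_t t_c; split => //; rewrite a_t (le_trans (ltW t_c) c_b).
Qed.

Lemma lebesgue_measure_geI_itvcc (a b c : R) : a <= c <= b ->
  lebesgue_measure ([set t | c <= t] `&` `[a, b]) = (b - c)%:E.
Proof.
case/andP=> a_c c_b; rewrite (_ : _ `&` _ = `[c, b]%classic).
  rewrite lebesgue_measure_itv /= lte_fin; case: ltP => [_|b_c]; first by rewrite -EFinD.
  by rewrite (_ : b = c) ?subrr //; apply/le_anti; rewrite c_b b_c.
apply/seteqP; split => t /=; rewrite !in_itv /=; first by case=> -> /andP[_ ->].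
by case/andP=> c_t t_b; split => //; rewrite t_b (le_trans a_c c_t).
Qed.

End IntervalMeasure.

Local Unset Implicit Arguments.

Theorem lemma4 (R : realType) (V : finType) (f : {set V} -> R) (k : nat)
  (t : 'I_k -> V) (x : 'I_k -> V -> R) (delta : R) :
  (forall S : {set V}, 0 <= f S) ->
  submodular f ->
  f (finset.set0 : {set V}) = 0 ->
  injective t ->
  (forall i j, 0 <= x i j) ->
  (forall j, \sum_(i < k) x i j = 1) ->
  (forall i, x i (t i) = 1) ->
  2^-1 <= delta -> delta <= 1 ->
  (\sum_(i < k | (0 < i)%N)
     \int[lebesgue_measure]_(theta in `[0%R, delta])
        (f (prefix_cap x i theta))%:E
   >= \int[lebesgue_measure]_(theta in `[0%R, 1%R]) (f (Uset x theta))%:E)%E.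
Proof.
move=> f_ge0 f_sub f0 _ x_ge0 x_sum1 _ half_le_delta delta_le1.
have k_gt0 (j : V) : (0 < k)%N.
  rewrite lt0n; apply: contra_eqN (x_sum1 j) => /eqP k0.
  rewrite big1 1?eq_sym ?oner_eq0 // => i.
  by have := ltn_ord i; rewrite [in X in (_ < X)%N]k0.
pose M j := prefix_max (x^~ j) k.
pose y (i : 'I_k) j := Num.min (prefix_max (x^~ j) i) (x i j).
pose s := sort (fun a b : V => M a <= M b) (enum V).
have s_uniq : uniq s by rewrite sort_uniq enum_uniq.
have s_all j : j \in s by rewrite mem_sort mem_enum.
pose m := greedy_marginal f s.
have lhs_ge (i : 'I_k) : (0 < i)%N -> ((\sum_j m j * y i j)%:E <=
    \int[lebesgue_measure]_(theta in `[0%R, delta]) (f (prefix_cap x i theta))%:E)%E.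
  move=> i_gt0.
  have mem_y j : [set th | j \in prefix_cap x i th] = [set th | th < y i j].
    by apply/seteqP; split => th; rewrite /= mem_prefix_cap.
  apply: modular_le_integral_setfun => //.
  - by move=> j; rewrite mem_y -set_itvNyo; exact: measurable_itv.
  - move=> j; rewrite mem_y -[in RHS](subr0 (y i j)); apply: lebesgue_measure_ltI_itvcc.
    rewrite le_min prefix_max_ge0 x_ge0 /=.
    exact: le_trans (min_prefix_max_le_half (x_ge0^~ j) (x_sum1 j) i) half_le_delta.
  - by move=> th _; exact: sum_greedy_marginal_le.
have rhs_eq : (\int[lebesgue_measure]_(theta in `[0%R, 1%R]) (f (Uset x theta))%:E
    = (\sum_j m j * (1 - M j))%:E)%E.
  have mem_M j : [set th | j \in Uset x th] = [set th | M j <= th].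
    by apply/seteqP; split => th; rewrite /= (mem_Uset x_ge0 _ _ (k_gt0 j)).
  apply: integral_setfun_modular => //.
  - by move=> j; rewrite mem_M -set_itvcy; exact: measurable_itv.
  - move=> j; rewrite mem_M; apply: lebesgue_measure_geI_itvcc.
    by rewrite prefix_max_ge0 prefix_max_le1.
  - move=> th _; have -> : Uset x th = [set j | M j <= th]%SET.
      by apply/setP => j; rewrite inE (mem_Uset x_ge0 _ _ (k_gt0 j)).
    rewrite sum_greedy_marginal_sorted //.
    by apply: sort_sorted => a b; exact: le_total.
apply: le_trans; last exact: lee_sum lhs_ge.
rewrite rhs_eq sumEFin lee_fin exchange_big /=.
rewrite [X in _ <= X](eq_bigr (fun j => m j * (1 - M j))) //.
by move=> j _; rewrite -mulr_sumr sum_min_prefix_max // x_sum1.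
Qed.
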